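(* Let $P=(P_t)_{t\ge0}$ be a $C_0$-semigroup on $(C_\kappa(E),\tau_\kappa^{\mathscr M})$ consisting of convex increasing (not necessarily linear) operators, with generator $(L,D(L))$. Then for every $\varphi\in C_\kappa(E)$ the function $u\colon[0,\infty)\to C_\kappa(E)$, $u(t):=P_t\varphi$, is a $D(L)$-viscosity solution of $u'(t)=Lu(t)$ for $t>0$, with $u(0)=\varphi$.
   Context: Standing assumptions and notation. $E$ is a completely regular Hausdorff topological space such that (1) every compact subset of $E$ is metrizable, (2) the Borel $\sigma$-algebra $\mathscr B(E)$ equals the Baire $\sigma$-algebra of $E$, and (3) a function $\varphi\colon E\to\mathbb R$ is continuous if and only if its restriction to every compact subset of $E$ is continuous. $\kappa\colon E\to(0,\infty)$ is a continuous weight function. $C_\kappa(E)$ denotes the space of continuous $\varphi\colon E\to\mathbb R$ with $\|\varphi\|_\kappa:=\sup_{x\in E}|\kappa(x)\varphi(x)|<\infty$. For a sequence $(C_n)$ of compact subsets of $E$ and positive reals $a_n\to0$ let $p_{\kappa,(C_n),(a_n)}(\varphi):=\sup_{n}a_n\sup_{x\in C_n}|\kappa(x)\varphi(x)|$; the mixed topology $\tau_\kappa^{\mathscr M}$ is the locally convex topology on $C_\kappa(E)$ generated by these seminorms. A family $P=(P_t)_{t\ge0}$ of maps $C_\kappa(E)\to C_\kappa(E)$ is a semigroup if $P_0\varphi=\varphi$ and $P_sP_t\varphi=P_{s+t}\varphi$. It is a $C_0$-semigroup on $(C_\kappa(E),\tau_\kappa^{\mathscr M})$ if moreover (iii) for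 every $T\ge0$, $\varepsilon>0$ and every seminorm $p_{\kappa,(K_n),(a_n)}$ there exist a seminorm $p_{\kappa,(C_n),(b_n)}$ and $\delta>0$ such that $p_{\kappa,(K_n),(a_n)}(P_t\varphi_1-P_t\varphi_2)<\varepsilon$ for all $t\in[0,T]$ and all $\varphi_1,\varphi_2$ with $p_{\kappa,(C_n),(b_n)}(\varphi_1-\varphi_2)<\delta$; and (iv) $\lim_{t\to0}p_{\kappa,(K_n),(a_n)}(P_t\varphi-\varphi)=0$ for every $\varphi$ and seminorm. Its generator $L$: $D(L)$ is the set of $\varphi$ for which $\tau_\kappa^{\mathscr M}\text{-}\lim_{t\to0}(P_t\varphi-\varphi)/t$ exists, and $L\varphi$ is this limit. An operator $T$ on $C_\kappa(E)$ is increasing if $\varphi_1\le\varphi_2$ implies $T\varphi_1\le T\varphi_2$, and convex if $T(\lambda\varphi_1+(1-\lambda)\varphi_2)\le\lambda T\varphi_1+(1-\lambda)T\varphi_2$ for $\lambda\in[0,1]$. Viscosity solutions: for $L\colon D\to C_\kappa(E)$ with $D\subset C_\kappa(E)$ nonempty, a $\tau_\kappa^{\mathscr M}$-continuous $u\colon[0,\infty)\to C_\kappa(E)$ is a $D$-viscosity subsolution of $u'=Lu$ if for every $t>0$, $x\in E$ and every ($\tau_\kappa^{\mathscr M}$-)differentiable $\psi\colon(0,\infty)\to C_\kappa(E)$ with $\psi(t)\in D$, $\psi(t)(x)=u(t)(x)$ and $\psi(s)\ge u(s)$ for all $s>0$, one has $\psi'(t)(x)\le(L\psi(t))(x)$;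 supersolution analogously with $\psi(s)\le u(s)$ for all $s>0$ and $\psi'(t)(x)\ge(L\psi(t))(x)$; a viscosity solution is both. *)

From HB Require Import structures.
From mathcomp Require Import all_boot all_order all_algebra.
From mathcomp Require Import all_classical all_reals all_analysis.
Set Implicit Arguments. Unset Strict Implicit. Unset Printing Implicit Defensive.
Import Order.TTheory GRing.Theory Num.Theory.
Import numFieldNormedType.Exports.
Local Open Scope classical_set_scope.
Local Open Scope ring_scope.

Section Defs.
Variables (R : realType) (E : topologicalType).

Definition metrizable_subset (K : set E) : Prop :=
  exists d : E -> E -> R,
    [/\ (forall x y, K x -> K y -> 0 <= d x y),
        (forall x y, K x -> K y -> (d x y = 0 <-> x = y)),
        (forall x y, K x -> K y -> d x y = d y x),
        (forall x y z, K x -> K y -> K z -> d x z <= d x y + d y z) &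
        (forall A : set E, A `<=` K ->
           ((exists U : set E, open U /\ A = U `&` K) <->
            (forall x, A x -> exists2 e : R, 0 < e &
                forall y, K y -> d x y < e -> A y)))].

Definition borel_sets : set (set E) := smallest (sigma_algebra setT) open.

Definition baire_sets : set (set E) :=
  smallest (sigma_algebra setT)
    [set A | exists (f : E -> R) (B : set R),
               continuous f /\ open B /\ A = f @^-1` B].

Definition standing_assumptions : Prop :=
  [/\ completely_regular_space E,
      hausdorff_space E,
      (forall K : set E, compact K -> metrizable_subset K),
      borel_sets = baire_sets &
      (forall f : E -> R,
          continuous f <-> (forall K : set E, compact K -> {within K, continuous f}))].

Variable kappa : E -> R.

Definition weight : Prop := continuous kappa /\ (forall x, 0 < kappa x).

Definition Ck (phi : E -> R) : Prop :=
  continuous phi /\ exists M : R, forall x, `|kappa x * phi x| <= M.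

(* p_{kappa,(C_n),(a_n)}(phi) = sup_n a_n sup_{x in C_n} |kappa x phi x|
   (as a sup of nonnegative numbers, with the convention sup of empty = 0). *)
Definition pmix (C : nat -> set E) (a : nat -> R) (phi : E -> R) : \bar R :=
  ereal_sup ([set e | exists n x, C n x /\ e = (a n * `|kappa x * phi x|)%:E]
             `|` [set 0%E]).

Definition adm (C : nat -> set E) (a : nat -> R) : Prop :=
  [/\ (forall n, compact (C n)), (forall n, 0 < a n) & a @ \oo --> (0 : R)].

Definition mconv (F : set_system R) (f : R -> E -> R) (l : E -> R) : Prop :=
  forall C a, adm C a -> (fun t => pmix C a (fun x => f t x - l x)) @ F --> 0%E.

Definition is_semigroup (P : R -> (E -> R) -> (E -> R)) : Prop :=
  [/\ (forall t phi, 0 <= t -> Ck phi -> Ck (P t phi)),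
      (forall phi, Ck phi -> P 0 phi = phi) &
      (forall s t phi, 0 <= s -> 0 <= t -> Ck phi -> P s (P t phi) = P (s + t) phi)].

Definition C0_semigroup (P : R -> (E -> R) -> (E -> R)) : Prop :=
  [/\ is_semigroup P,
      (forall (T eps : R), 0 <= T -> 0 < eps -> forall K a, adm K a ->
         exists C b (delta : R), [/\ adm C b, 0 < delta &
           forall t phi1 phi2, 0 <= t <= T -> Ck phi1 -> Ck phi2 ->
             (pmix C b (fun x => (phi1 x - phi2 x)%R) < delta%:E)%E ->
             (pmix K a (fun x => (P t phi1 x - P t phi2 x)%R) < eps%:E)%E]) &
      (forall phi, Ck phi -> mconv (0^'+) (fun t => P t phi) phi)].

Definition increasing_op (T : (E -> R) -> (E -> R)) : Prop :=
  forall phi1 phi2, Ck phi1 -> Ck phi2 -> (forall x, phi1 x <= phi2 x) ->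
    forall x, T phi1 x <= T phi2 x.

Definition convex_op (T : (E -> R) -> (E -> R)) : Prop :=
  forall phi1 phi2 (lam : R), Ck phi1 -> Ck phi2 -> 0 <= lam <= 1 ->
    forall x, T (fun y => lam * phi1 y + (1 - lam) * phi2 y) x
              <= lam * T phi1 x + (1 - lam) * T phi2 x.

Definition is_gen_limit (P : R -> (E -> R) -> (E -> R)) (phi l : E -> R) : Prop :=
  Ck phi /\ Ck l /\ mconv (0^'+) (fun t x => (P t phi x - phi x) / t) l.

Definition gen_dom (P : R -> (E -> R) -> (E -> R)) : set (E -> R) :=
  [set phi | exists l, is_gen_limit P phi l].

(* L phi := the (unique, tau^M is Hausdorff) limit *)
Definition gen (P : R -> (E -> R) -> (E -> R)) (phi : E -> R) : E -> R :=
  get (is_gen_limit P phi).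

Definition is_mderiv (psi : R -> E -> R) (t : R) (d : E -> R) : Prop :=
  Ck d /\ mconv (0^') (fun h x => (psi (t + h) x - psi t x) / h) d.

Definition mdifferentiable (psi : R -> E -> R) : Prop :=
  forall s, 0 < s -> Ck (psi s) /\ exists d, is_mderiv psi s d.

Definition mderiv (psi : R -> E -> R) (t : R) : E -> R := get (is_mderiv psi t).

Definition mcontinuous0 (u : R -> E -> R) : Prop :=
  (forall t, 0 <= t -> Ck (u t)) /\
  forall s : R, 0 <= s -> mconv (within [set t : R | 0 <= t] (nbhs s)) u (u s).

Definition visc_sub (D : set (E -> R)) (L : (E -> R) -> (E -> R)) (u : R -> E -> R) :=
  mcontinuous0 u /\
  forall t x psi, 0 < t -> mdifferentiable psi -> D (psi t) -> psi t x = u t x ->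
    (forall s, 0 < s -> forall y, u s y <= psi s y) ->
    mderiv psi t x <= L (psi t) x.

Definition visc_super (D : set (E -> R)) (L : (E -> R) -> (E -> R)) (u : R -> E -> R) :=
  mcontinuous0 u /\
  forall t x psi, 0 < t -> mdifferentiable psi -> D (psi t) -> psi t x = u t x ->
    (forall s, 0 < s -> forall y, psi s y <= u s y) ->
    L (psi t) x <= mderiv psi t x.

Definition visc_sol D L u := visc_sub D L u /\ visc_super D L u.

End Defs.

From HB Require Import structures.
From mathcomp Require Import all_boot all_order all_algebra.
From mathcomp Require Import all_classical all_reals all_analysis.
From mathcomp Require Import ring lra.
Import Order.TTheory GRing.Theory Num.Theory.
Import numFieldNormedType.Exports.
Set Implicit Arguments. Unset Strict Implicit. Unset Printing Implicit Defensive.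
Local Open Scope classical_set_scope.
Local Open Scope ring_scope.

(* Let psi touch u(t) = P_t phi from above at (t, x).  By monotonicity,
   u(t) = P_h u(t - h) <= P_h psi(t - h), and by convexity of P_h the secant
   (P_h psi(t - h) - P_h psi(t)) / h is at most P_h V_h - P_h psi(t), where
   V_h = psi(t) + (psi(t - h) - psi(t)) / h converges to psi(t) - psi'(t) in the
   mixed topology.  The equicontinuity of the semigroup on [0, 1] turns this
   into pointwise convergence of P_h V_h, while (P_h psi(t) - psi(t)) / h tends
   to L psi(t); letting h -> 0 gives psi'(t) <= L psi(t).  Touching from below
   works the same way with the convex combination reversed.  Continuity of u
   follows from equicontinuity and strong continuity at 0. *)

Lemma cvge0_nonnegP (R : realType) (T : Type) (F : set_system T) {FF : Filter F}
    (g : T -> \bar R) :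
  (forall t, 0 <= g t)%E ->
  g @ F --> 0%E <-> forall e : R, 0 < e -> \forall t \near F, (g t < e%:E)%E.
Proof.
move=> g0; split.
- move=> /fine_cvgP [gfin /cvgr0Pnorm_lt gcvg] e e0.
  apply: filterS2 gfin (gcvg e e0) => t /= gtfin gte.
  by rewrite -(fineK gtfin) lte_fin (le_lt_trans (ler_norm _) gte).
- move=> glt; apply/fine_cvgP; split.
  + near=> t; rewrite ge0_fin_numE //.
    by apply: lt_le_trans (leey 1%:E); near: t; exact: glt.
  + apply/cvgr0Pnorm_lt => e e0; near=> t.
    have gte : (g t < e%:E)%E by near: t; exact: glt.
    have gtfin : g t \is a fin_num by rewrite ge0_fin_numE // (lt_le_trans gte (leey _)).
    by rewrite /= ger0_norm -?lee_fin ?fineK // -lte_fin fineK.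
Unshelve. all: by end_near.
Qed.

Section MixedSeminorm.
Variables (R : realType) (E : topologicalType) (kappa : E -> R).
Implicit Types (C : nat -> set E) (a : nat -> R) (f g : E -> R).

Lemma pmix_ge0 C a f : (0 <= pmix kappa C a f)%E.
Proof. by apply: ereal_sup_ubound; right. Qed.

Lemma pmix_ub C a f n x : C n x -> ((a n * `|kappa x * f x|)%:E <= pmix kappa C a f)%E.
Proof. by move=> Cnx; apply: ereal_sup_ubound; left; exists n, x. Qed.

Lemma eq_pmix C a f g : (forall x, `|f x| = `|g x|) -> pmix kappa C a f = pmix kappa C a g.
Proof.
move=> fg; rewrite /pmix; congr (ereal_sup (_ `|` _)).
by apply/seteqP; split=> _ [n [x [Cnx ->]]]; exists n, x; rewrite !normrM fg.
Qed.

Lemma pmix0 C a f : (forall x, f x = 0) -> pmix kappa C a f = 0%E.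
Proof.
move=> f0; apply/eqP; rewrite eq_le pmix_ge0 andbT.
by apply: ge_ereal_sup => _ [[n [x [_ ->]]]|->] //; rewrite f0 mulr0 normr0 mulr0.
Qed.

Lemma adm_set1 (x : E) : adm (fun _ : nat => [set x]) (@harmonic R).
Proof.
split=> [n|n|]; [exact: compact_set1|exact: harmonic_gt0|exact: cvg_harmonic].
Qed.

Lemma pmix_set1 x f :
  pmix kappa (fun _ => [set x]) (@harmonic R) f = (`|kappa x * f x|)%:E.
Proof.
apply/eqP; rewrite eq_le; apply/andP; split.
- apply: ge_ereal_sup => _ [[n [y [-> ->]]]|->]; rewrite lee_fin //.
  by rewrite ler_piMl // /harmonic invf_le1 // ler1n.
- by have := @pmix_ub (fun _ => [set x]) (@harmonic R) f 0 x erefl; rewrite /= invr1 mul1r.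
Qed.

End MixedSeminorm.

Section MixedConvergence.
Variables (R : realType) (E : topologicalType) (kappa : E -> R).
Implicit Types (F G : set_system R) (f : R -> E -> R) (l g : E -> R).

Lemma mconv_pointwise F {FF : Filter F} f l x :
  0 < kappa x -> mconv kappa F f l -> (fun t => f t x) @ F --> l x.
Proof.
move=> kx0 fl; apply/cvgrPdist_lt => e e0; near=> t.
have : (pmix kappa (fun _ => [set x]) (@harmonic R) (fun y => (f t y - l y)%R)
          < ((e * kappa x)%R)%:E)%E.
  near: t; apply: (cvge0_nonnegP (fun t => pmix_ge0 kappa _ _ _)).1.
    exact: fl (adm_set1 R x).
  exact: mulr_gt0.
rewrite pmix_set1 lte_fin normrM (gtr0_norm kx0).
by rewrite distrC mulrC ltr_pM2r.
Unshelve. all: by end_near.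
Qed.

Lemma mconv_comp F G {FG : Filter G} (h : R -> R) f l :
  h @ G --> F -> mconv kappa F f l -> mconv kappa G (fun t => f (h t)) l.
Proof. by move=> hGF fl C a Ca; apply: cvg_comp hGF (fl C a Ca). Qed.

Lemma mconv_unit_affine F f l g (c : R) : `|c| = 1 ->
  mconv kappa F f l ->
  mconv kappa F (fun t x => g x + c * f t x) (fun x => g x + c * l x).
Proof.
move=> c1 fl C a Ca.
suff -> : (fun t => pmix kappa C a (fun x => g x + c * f t x - (g x + c * l x)))
    = (fun t => pmix kappa C a (fun x => f t x - l x)) by exact: fl.
apply/funext => t; apply: eq_pmix => x.
by rewrite opprD addrACA subrr add0r -mulrBr normrM c1 mul1r.
Qed.

End MixedConvergence.

Lemma near_at_right_dist (R : realType) (Q : R -> Prop) (s : R) :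
  (\forall h \near 0^'+, Q h) -> Q 0 -> \forall t \near s, Q `|t - s|.
Proof.
move=> /nbhs_ballP [e e0 Qe] Q0; apply/nbhs_ballP; exists e => // t.
rewrite /ball /= => st; have [->|ts0] := eqVneq `|t - s| 0; first exact: Q0.
apply: Qe; last by rewrite lt_neqAle eq_sym ts0 normr_ge0.
by rewrite /ball /= sub0r normrN normr_id distrC.
Qed.

Lemma opp_at_right0 (R : realType) : (fun h : R => - h) @ 0^'+ --> (0 : R)^'.
Proof.
rewrite -[X in _ --> X^']oppr0 -at_leftN oppr0.
by apply: within_subset => y /= /lt_eqF ->.
Qed.

Section WeightedSpace.
Variables (R : realType) (E : topologicalType) (kappa : E -> R).

Lemma CkD (f g : E -> R) : Ck kappa f -> Ck kappa g -> Ck kappa (fun y => f y + g y).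
Proof.
move=> [fcont [Mf Mfb]] [gcont [Mg Mgb]]; split.
  by move=> y; apply: cvgD; [exact: fcont|exact: gcont].
exists (Mf + Mg) => y; rewrite mulrDr; apply: le_trans (ler_normD _ _) _.
exact: lerD.
Qed.

Lemma CkN (f : E -> R) : Ck kappa f -> Ck kappa (fun y => - f y).
Proof.
move=> [fcont [M Mb]]; split; first by move=> y; apply: cvgN; exact: fcont.
by exists M => y; rewrite mulrN normrN.
Qed.

Lemma CkZ (c : R) (f : E -> R) : Ck kappa f -> Ck kappa (fun y => c * f y).
Proof.
move=> [fcont [M Mb]]; split; first by move=> y; apply: cvgMr; exact: fcont.
by exists (`|c| * M) => y; rewrite mulrCA normrM ler_wpM2l.
Qed.

Lemma is_mderiv_backward (psi : R -> E -> R) (t sg : R) (d : E -> R) :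
  `|sg| = 1 -> is_mderiv kappa psi t d ->
  mconv kappa 0^'+ (fun h y => psi t y + sg / h * (psi (t - h) y - psi t y))
    (fun y => psi t y - sg * d y).
Proof.
move=> sg1 [_ dlim].
have dback := mconv_unit_affine (psi t) (etrans (normrN sg) sg1)
  (mconv_comp (@opp_at_right0 R) dlim).
rewrite (_ : (fun y => psi t y - sg * d y) = (fun y => psi t y + - sg * d y)); last first.
  by apply/funext => y; rewrite mulNr.
rewrite (_ : (fun h y => psi t y + sg / h * (psi (t - h) y - psi t y))
  = (fun h y => psi t y + - sg * ((psi (t + - h) y - psi t y) / - h))); first exact: dback.
by apply/funext => h; apply/funext => y; congr (_ + _); rewrite invrN; ring.
Qed.

End WeightedSpace.

Lemma unit_normP (R : realDomainType) (sg : R) : `|sg| = 1 -> sg = 1 \/ sg = -1.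
Proof.
move=> sg1; have : (sg == 1) || (sg == -1) by rewrite -sqrf_eq1 sqr_norm_eq1 sg1.
by case/orP => /eqP ->; [left|right].
Qed.

Section OrderedOperators.
Variables (R : realType) (E : topologicalType) (kappa : E -> R).
Variable T : (E -> R) -> (E -> R).
Implicit Types (f g : E -> R) (sg h : R).

Lemma increasing_op_signed sg f g : increasing_op kappa T -> `|sg| = 1 ->
  Ck kappa f -> Ck kappa g -> (forall y, 0 <= sg * (f y - g y)) ->
  forall x, 0 <= sg * (T f x - T g x).
Proof.
move=> Tinc /unit_normP [->|->] Cf Cg fg x.
- by rewrite mul1r subr_ge0; apply: Tinc => // y; rewrite -subr_ge0 -[_ - _]mul1r.
- rewrite mulN1r oppr_ge0 subr_le0; apply: Tinc => // y.
  by rewrite -subr_le0 -oppr_ge0 -mulN1r.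
Qed.

(* With [V] the argument of [T] on the right: for [sg = 1] use
   [f = h V + (1 - h) g], for [sg = -1] use [g = (f + h V) / (1 + h)]. *)
Lemma convex_op_secant sg h f g x : convex_op kappa T -> `|sg| = 1 ->
  Ck kappa f -> Ck kappa g -> 0 < h <= 1 ->
  sg * (T f x - T g x) / h <= T (fun y => g y + sg / h * (f y - g y)) x - T g x.
Proof.
move=> Tconv sg1 Cf Cg /andP [h0 h1].
set V := fun y => g y + sg / h * (f y - g y).
have CV : Ck kappa V by apply: CkD => //; apply: CkZ; apply: CkD => //; exact: CkN.
have hn0 : h != 0 by rewrite gt_eqF.
have h01 : 0 <= h <= 1 by rewrite (ltW h0) h1.
rewrite ler_pdivrMr //; case: (unit_normP sg1) => sgE; rewrite [in X in X <= _]sgE.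
- have := Tconv V g h CV Cg h01 x.
  rewrite (_ : (fun y => h * V y + (1 - h) * g y) = f); first by lra.
  by apply/funext => y; rewrite /V sgE; field.
- have h1n0 : 1 + h != 0 by rewrite gt_eqF // addr_gt0.
  have lam01 : 0 <= (1 + h)^-1 <= 1.
    by rewrite invr_ge0 addr_ge0 ?(ltW h0) //= invf_le1 ?addr_gt0 // lerDl ltW.
  have := Tconv f V (1 + h)^-1 Cf CV lam01 x.
  rewrite (_ : (fun y => (1 + h)^-1 * f y + (1 - (1 + h)^-1) * V y) = g); last first.
    by apply/funext => y; rewrite /V sgE; field; apply/andP.
  move/(ler_wpM2l (ltW (addr_gt0 ltr01 h0))).
  rewrite (_ : (1 + h) * ((1 + h)^-1 * T f x + (1 - (1 + h)^-1) * T V x)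
    = T f x + h * T V x); first by lra.
  by field.
Qed.

End OrderedOperators.

Section C0Semigroup.
Variables (R : realType) (E : topologicalType) (kappa : E -> R).
Variable P : R -> (E -> R) -> (E -> R).
Hypothesis P_C0 : C0_semigroup kappa P.

Lemma C0_semigroup_mcontinuous phi :
  Ck kappa phi -> mcontinuous0 kappa (fun t => P t phi).
Proof.
case: P_C0 => [[PCk P0 PD] Pequi Pstrong] Cphi.
split=> [t t0|s s0 K a Ka]; first exact: PCk.
apply/(cvge0_nonnegP (fun t => pmix_ge0 kappa _ _ _)) => e e0.
have [C [b [del [Cb del0 Pequi_Ka]]]] := Pequi (s + 1) e (addr_ge0 s0 ler01) e0 K a Ka.
set Q := fun h => (pmix kappa C b (fun x => (P h phi x - phi x)%R) < del%:E)%E.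
have Qnear : \forall t \near s, Q `|t - s| /\ `|t - s| < 1.
  apply: (near_at_right_dist (Q := fun h => Q h /\ h < 1)); last split;
    last by []; last by rewrite /Q P0 // pmix0 ?lte_fin // => x; rewrite subrr.
  apply: filterI; last exact: nbhs_right_lt.
  exact: (cvge0_nonnegP (fun t => pmix_ge0 kappa _ _ _)).1 (Pstrong _ Cphi _ _ Cb) _ del0.
near=> t.
have t0 : 0 <= t by near: t; exact: withinT.
have [Qts ts1] : Q `|t - s| /\ `|t - s| < 1 by near: t; exact: cvg_within Qnear.
have [st|ts] := leP s t.
- have -> : P t phi = P s (P (t - s) phi) by rewrite PD ?subr_ge0 // addrC subrK.
  apply: Pequi_Ka => //; first by rewrite s0 lerDl ler01.
    by apply: PCk; rewrite ?subr_ge0.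
  by move: Qts; rewrite ger0_norm // subr_ge0.
- have -> : P s phi = P t (P (s - t) phi) by rewrite PD ?subr_ge0 ?(ltW ts) // addrC subrK.
  rewrite (@eq_pmix _ _ kappa K a _ (fun x => P t (P (s - t) phi) x - P t phi x));
    last by move=> x; rewrite distrC.
  apply: Pequi_Ka => //; first by rewrite t0 (le_trans (ltW ts)) // lerDl.
    by apply: PCk; rewrite ?subr_ge0 ?ltW.
  by move: Qts; rewrite distrC ger0_norm // subr_ge0 ltW.
Unshelve. all: by end_near.
Qed.

(* Equicontinuity of [P] on [[0, 1]] controls [P h (V h) - P h v]. *)
Lemma C0_semigroup_cvg_diag (V : R -> E -> R) v x :
  0 < kappa x -> Ck kappa v -> (\forall h \near 0^'+, Ck kappa (V h)) ->
  mconv kappa 0^'+ V v -> (fun h => P h (V h) x) @ 0^'+ --> v x.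
Proof.
case: P_C0 => [_ Pequi Pstrong] kx0 Cv CV Vv.
suff PVPv : (fun h => P h (V h) x - P h v x) @ 0^'+ --> 0.
  have -> : (fun h => P h (V h) x) = (fun h => (P h (V h) x - P h v x) + P h v x).
    by apply/funext => h; rewrite subrK.
  by rewrite -[v x]add0r; apply: cvgD => //; exact: mconv_pointwise (Pstrong v Cv).
apply/cvgrPdist_lt => e e0.
have [C [b [del [Cb del0 Pequi_x]]]] :=
  Pequi 1 (e * kappa x) ler01 (mulr_gt0 e0 kx0) _ _ (adm_set1 R x).
near=> h.
have : (pmix kappa (fun _ => [set x]) (@harmonic R)
          (fun y => (P h (V h) y - P h v y)%R) < ((e * kappa x)%R)%:E)%E.
  apply: Pequi_x => //.
  - have h0 : 0 < h by near: h; exact: nbhs_right_gt.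
    have h1 : h < 1 by near: h; exact: nbhs_right_lt.
    by rewrite !ltW.
  - by near: h.
  - near: h; exact: (cvge0_nonnegP (fun t => pmix_ge0 kappa _ _ _)).1 (Vv _ _ Cb) _ del0.
by rewrite pmix_set1 lte_fin normrM (gtr0_norm kx0) mulrC ltr_pM2r // sub0r normrN.
Unshelve. all: by end_near.
Qed.

End C0Semigroup.

Section Viscosity.
Variables (R : realType) (E : topologicalType) (kappa : E -> R).
Variable P : R -> (E -> R) -> (E -> R).
Hypothesis P_C0 : C0_semigroup kappa P.
Hypothesis P_incr_convex :
  forall t, 0 <= t -> increasing_op kappa (P t) /\ convex_op kappa (P t).
(* [sg = 1] handles test functions above [u] (subsolution), [sg = -1] those
   below it (supersolution). *)
Variables (phi : E -> R) (psi : R -> E -> R) (sg t : R) (x : E).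
Hypotheses (Cphi : Ck kappa phi) (sg1 : `|sg| = 1) (t0 : 0 < t).
Hypothesis psi_diff : mdifferentiable kappa psi.
Hypothesis psi_touch : psi t x = P t phi x.
Hypothesis psi_side : forall s, 0 < s -> forall y, 0 <= sg * (psi s y - P s phi y).

Lemma secant_quotient_near :
  \forall h \near 0^'+, - sg * ((P h (psi t) x - psi t x) / h)
    <= P h (fun y => psi t y + sg / h * (psi (t - h) y - psi t y)) x - P h (psi t) x.
Proof.
case: P_C0 => [[PCk _ PD] _ _].
have Cpsi s : 0 < s -> Ck kappa (psi s) by move=> s0; exact: (psi_diff s0).1.
near=> h.
have h0 : 0 < h by near: h; exact: nbhs_right_gt.
have h1 : h < 1 by near: h; exact: nbhs_right_lt.
have ht : h < t by near: h; exact: nbhs_right_lt.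
have [Pinc Pconv] := P_incr_convex (ltW h0).
have Cf : Ck kappa (psi (t - h)) by apply: Cpsi; rewrite subr_gt0.
have above : 0 <= sg * (P h (psi (t - h)) x - psi t x).
  have -> : psi t x = P h (P (t - h) phi) x.
    by rewrite psi_touch PD ?(ltW h0) ?subr_ge0 ?(ltW ht) // addrC subrK.
  apply: increasing_op_signed Pinc sg1 Cf _ _ _ => //.
    by apply: PCk; rewrite ?subr_ge0 ?(ltW ht).
  by apply: psi_side; rewrite subr_gt0.
apply: le_trans (convex_op_secant x Pconv sg1 Cf (Cpsi t t0) _); last by rewrite h0 ltW.
rewrite (_ : - sg * _ = sg * (psi t x - P h (psi t) x) / h); last by ring.
rewrite ler_wpM2r ?invr_ge0 ?(ltW h0) // -subr_ge0.
by rewrite (_ : _ - _ = sg * (P h (psi (t - h)) x - psi t x)) //; ring.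
Unshelve. all: by end_near.
Qed.

Lemma viscosity_test_inequality : weight kappa -> gen_dom kappa P (psi t) ->
  sg * mderiv kappa psi t x <= sg * gen kappa P (psi t) x.
Proof.
move=> [_ kpos] Lpsi; have kx0 := kpos x.
case: P_C0 => [_ _ Pstrong].
have [Cpsit [d0 d0P]] := psi_diff t0.
have [Cd dlim] : is_mderiv kappa psi t (mderiv kappa psi t) := getPex (ex_intro _ d0 d0P).
have [_ [_ Llim]] : is_gen_limit kappa P (psi t) (gen kappa P (psi t)) := getPex Lpsi.
set d := mderiv kappa psi t in Cd dlim *; set L := gen kappa P (psi t) in Llim *.
have CV : \forall h \near 0^'+,
    Ck kappa (fun y => psi t y + sg / h * (psi (t - h) y - psi t y)).
  near=> h; apply: CkD => //; apply: CkZ; apply: CkD; last exact: CkN.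
  have h0 : 0 < h by near: h; exact: nbhs_right_gt.
  have ht : h < t by near: h; exact: nbhs_right_lt.
  by apply: (psi_diff _).1; rewrite subr_gt0.
have PVlim := C0_semigroup_cvg_diag P_C0 kx0 (CkD Cpsit (CkN (CkZ sg Cd))) CV
  (is_mderiv_backward sg1 (conj Cd dlim)).
have Llimx : - sg * ((P h (psi t) x - psi t x) / h) @[h --> 0^'+] --> - sg * L x.
  by apply: cvgMr; exact: mconv_pointwise kx0 Llim.
have : - sg * L x <= psi t x - sg * d x - psi t x.
  apply: ler_cvg_to Llimx (cvgB PVlim (mconv_pointwise kx0 (Pstrong _ Cpsit))) _.
  exact: secant_quotient_near.
by rewrite mulNr addrAC subrr add0r lerN2.
Unshelve. all: by end_near.
Qed.

End Viscosity.

Theorem theorem6p2 (R : realType) (E : topologicalType) (kappa : E -> R)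
  (P : R -> (E -> R) -> (E -> R)) :
  standing_assumptions R E ->
  weight kappa ->
  C0_semigroup kappa P ->
  (forall t, 0 <= t -> increasing_op kappa (P t) /\ convex_op kappa (P t)) ->
  forall phi, Ck kappa phi ->
    visc_sol kappa (gen_dom kappa P) (gen kappa P) (fun t => P t phi)
    /\ P 0 phi = phi.
Proof.
move=> _ kappa_weight P_C0 P_incr_convex phi Cphi.
have [[_ P0 _] _ _] := P_C0.
have u_cont := C0_semigroup_mcontinuous P_C0 Cphi.
split; last exact: P0.
split; split=> // t x psi t0 psi_diff Lpsi touch side.
- have := viscosity_test_inequality P_C0 P_incr_convex Cphi (normr1 R) t0 psi_diff
    touch _ kappa_weight Lpsi.
  by rewrite !mul1r; apply=> s s0 y; rewrite mul1r subr_ge0; exact: side.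
- have := viscosity_test_inequality P_C0 P_incr_convex Cphi (normrN1 R) t0 psi_diff
    touch _ kappa_weight Lpsi.
  by rewrite !mulN1r lerN2; apply=> s s0 y; rewrite mulN1r oppr_ge0 subr_le0; exact: side.
Qed.
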